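(* Let $G$ and $H$ be finite groups, let $p$ be a prime, and suppose that $G$ is nilpotent. Suppose that for every positive integer $n$, the number of conjugacy classes of $p$-regular elements of $G$ of size $n$ equals the number of conjugacy classes of $p$-regular elements of $H$ of size $n$. Then $H$ is nilpotent.
   Context: An element is $p$-regular if its order is not divisible by $p$. The size of the conjugacy class of $g$ in $G$ is $|G:C_G(g)|$. *)

From mathcomp Require Import all_boot all_fingroup all_solvable pgroup nilpotent.
Set Implicit Arguments. Unset Strict Implicit. Unset Printing Implicit Defensive.
Local Open Scope group_scope.

Definition num_preg_classes_of_size (gT : finGroupType) (G : {group gT})
    (p n : nat) : nat :=
  #|[set C in classes G | [forall x in C, (p^').-elt x] && (#|C| == n)]|.

(* Write G = 'O_p(G) \x Q with Q = 'O_p^'(G).  The p-regular classes of G are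
   the classes of Q, whose sizes are prime to p, so the same holds in H.  Then
   a Sylow p-subgroup P of H is normal (every h lies in the normaliser of a
   conjugate of P, and a proper subgroup cannot cover H by its conjugates) and
   is centralised by a Schur-Zassenhaus complement L, so H = P \x L and the
   p-regular classes of H are the classes of L.  Hence L and the nilpotent
   group Q have the same class sizes, and L is nilpotent by the argument of
   Cossey, Hawkes and Mann: for a Sylow q-subgroup T of L, the number of
   elements of L with class size prime to q is |Z(L)|_q |L|_q'; counting the
   T-fixed cosets of Z(L) :&: T among them gives Z(T) <= Z(L), and covering them
   by the conjugates of C_L(T) then forces N_L(T) = L. *)

From mathcomp Require Import all_boot all_fingroup all_solvable pgroup nilpotent.
From mathcomp Require Import zify.

Set Implicit Arguments. Unset Strict Implicit. Unset Printing Implicit Defensive.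

Lemma leq_card_bigcup (T I : finType) (J : {pred I}) (F : I -> {set T}) :
  #|\bigcup_(i in J) F i| <= \sum_(i in J) #|F i|.
Proof.
elim/big_rec2: _ => [|i n U _ leUn]; first by rewrite cards0.
by rewrite (leq_trans (leq_card_setU _ _)) ?leq_add2l.
Qed.

Section Counting.

Variable gT : finGroupType.
Implicit Types (A : {set gT}) (K M N T Z : {group gT}).
Local Open Scope group_scope.

Lemma leq_card_bigcup_conjugates M N K :
  N \subset K -> N \subset 'N(M) ->
  #|\bigcup_(B in M :^: K) B| <= (1 + #|K : N| * (#|M| - 1))%N.
Proof.
move=> sNK nMN.
have sub1D : \bigcup_(B in M :^: K) B \subset 1 |: \bigcup_(B in M :^: K) B^#.
  apply/subsetP=> x /bigcupP[B MK_B Bx]; rewrite in_setU1.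
  by case: eqP => //= /eqP ntx; apply/bigcupP; exists B; rewrite // in_setD1 ntx.
apply: leq_trans (subset_leq_card sub1D) _.
apply: leq_trans (leq_card_setU _ _) _; rewrite cards1 leq_add2l.
apply: leq_trans (leq_card_bigcup _ _) _.
have -> : \sum_(B in M :^: K) #|B^#| = (#|M :^: K| * (#|M| - 1))%N.
  rewrite -sum_nat_const; apply: eq_bigr => _ /imsetP[g _ ->].
  by rewrite -(cardJg M g) (cardsD1 1 (M :^ g)) group1 addKn.
rewrite card_conjugates leq_mul2r; apply/orP; right.
by rewrite dvdn_leq ?indexg_gt0 // indexgS // subsetI sNK.
Qed.

Lemma conjugates_cover_sub M K :
  M \subset K -> K \subset \bigcup_(B in M :^: K) B -> K \subset M.
Proof.
move=> sMK covK; rewrite -indexg_eq1 eqn_leq indexg_gt0 andbT.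
have := leq_trans (subset_leq_card covK) (leq_card_bigcup_conjugates sMK (normG M)).
have := Lagrange sMK; have := indexg_gt0 K M; have := cardG_gt0 M.
nia.
Qed.

Lemma card_rcosets_stable Z A :
  Z * A \subset A -> #|A| = (#|Z| * #|rcosets Z A|)%N.
Proof.
move=> sZAA; rewrite -sum1_card (partition_big_imset (rcoset Z)) /=.
rewrite mulnC -sum_nat_const.
apply: eq_bigr => _ /imsetP[x Ax ->]; rewrite -(card_rcoset Z x) -sum1_card.
apply: eq_bigl => y; rewrite !rcosetE; apply/andP/idP => [[_ /eqP <-] | Zxy].
  exact: rcoset_refl.
split; last exact/eqP/rcoset_eqP.
by case/rcosetP: Zxy => z Zz ->; apply: (subsetP sZAA); apply: mem_mulg.
Qed.

Lemma leq_index_norm_mul_cent K T : T \subset K ->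
  (#|K : 'N_K(T)| * #|'C_K(T)| * #|T| <= #|'Z(T)| * #|K|)%N.
Proof.
move=> sTK.
have CTE : 'C_K(T) :&: T = 'Z(T) by rewrite setIAC (setIidPr sTK).
have le_CT_N : #|'C_K(T) * T| <= #|'N_K(T)|.
  by rewrite subset_leq_card // mulG_subG setIS ?cent_sub // subsetI sTK normG.
rewrite -mulnA mul_cardG CTE mulnA [(_ * #|K|)%N]mulnC leq_mul2r.
rewrite -(Lagrange (subsetIl K 'N(T))).
by rewrite [(#|_| * #|K : _|)%N]mulnC leq_mul2l le_CT_N !orbT.
Qed.

End Counting.

Section ClassSizes.

Variable gT : finGroupType.
Implicit Types (K T : {group gT}) (P : pred nat).
Local Open Scope group_scope.

Definition num_classes_of_size (K : {set gT}) n := #|[set C in classes K | #|C| == n]|.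

Definition p'_class_elts p (K : {set gT}) := [set x in K | ~~ (p %| #|x ^: K|)].

Lemma num_classes_of_size0 K : num_classes_of_size K 0 = 0.
Proof.
apply/eqP; rewrite cards_eq0 -subset0; apply/subsetP=> _ /setIdP[/imsetP[x _ ->]].
by rewrite cards_eq0 => /eqP xK0; have := class_refl K x; rewrite xK0 inE.
Qed.

Lemma sum_classes_by_size K (F : nat -> nat) N : #|K| <= N ->
  (\sum_(C in classes K) F #|C| = \sum_(n < N.+1) num_classes_of_size K n * F n)%N.
Proof.
move=> leKN; have ltCN C : C \in classes K -> #|C| < N.+1.
  case/imsetP=> x Kx ->; rewrite ltnS (leq_trans _ leKN) //.
  exact/subset_leq_card/class_subG.
rewrite (partition_big (fun C : {set gT} => inord #|C| : 'I_N.+1) xpredT) //=.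
apply: eq_bigr => n _; rewrite -sum_nat_const.
apply: eq_big => [C | C /andP[KC /eqP <-]]; last by rewrite inordK ?ltCN.
rewrite inE; case KC: (C \in classes K) => //=.
by rewrite -val_eqE /= inordK ?ltCN.
Qed.

Lemma card_class_size_pred K P :
  #|[set x in K | P #|x ^: K|]| = (\sum_(C in classes K) P #|C| * #|C|)%N.
Proof.
have /and3P[_ tiK _] := classes_partition K.
have sPK : [set C in classes K | P #|C|] \subset classes K.
  by apply/subsetP=> C /setIdP[].
have -> : [set x in K | P #|x ^: K|] = cover [set C in classes K | P #|C|].
  apply/setP=> x; rewrite /cover; apply/setIdP/bigcupP => [[Kx Px] | ].
    by exists (x ^: K); rewrite ?class_refl // inE mem_classes.
  case=> _ /setIdP[/imsetP[y Ky ->] Py] xKy.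
  by have /class_eqP-> := xKy; rewrite (subsetP (class_subG Ky (subxx K))).
rewrite -(eqP (trivIsetS sPK tiK)) big_mkcond [RHS]big_mkcond.
apply: eq_bigr => C _; rewrite inE; case: (C \in classes K) => //=.
by case: ifP; rewrite ?mul1n ?mul0n.
Qed.

Lemma center_class_size1 K : [set x in K | #|x ^: K| == 1%N] = 'Z(K).
Proof.
apply/setP=> x; rewrite !inE -index_cent1 indexg_eq1 subsetI subxx /=.
by rewrite sub_cent1.
Qed.

Lemma card_class_center_mul K x z : z \in 'Z(K) -> #|(z * x) ^: K| = #|x ^: K|.
Proof.
case/setIP=> _ cKz; rewrite -!index_cent1; congr #|K : _|.
apply/setP=> y; rewrite !in_setI; case Ky: (y \in K) => //=.
rewrite cent1C [RHS]cent1C groupMl // cent1C.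
by apply/cent1P/esym; apply: (centP cKz).
Qed.

Lemma class_p'P q K T x : prime q -> q.-Sylow(K) T -> x \in K ->
  reflect (exists2 g, g \in K & T :^ g \subset 'C[x]) (~~ (q %| #|x ^: K|)).
Proof.
move=> q_pr sylT Kx; rewrite -index_cent1 -p'natE //.
have sCK : 'C_K[x] \subset K := subsetIl K _.
apply: (iffP idP) => [q'CK | [g Kg sTgC]].
  have [S sylS] := Sylow_exists q 'C_K[x]; have [sSC qS q'S] := and3P sylS.
  have sylSK : q.-Sylow(K) S.
    by rewrite /pHall (subset_trans sSC sCK) qS -(Lagrange_index sCK sSC) pnatM q'CK.
  have [g Kg defS] := Sylow_trans sylT sylSK.
  by exists g; rewrite // -defS (subset_trans sSC) ?subsetIr.
have sylTg : q.-Sylow(K) (T :^ g) by rewrite pHallJ.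
have [sTgK _ q'Tg] := and3P sylTg.
by apply: pnat_dvd q'Tg; rewrite indexgS // subsetI sTgK.
Qed.

End ClassSizes.

Section SylowCenter.

Variables (gT : finGroupType) (K T : {group gT}) (q : nat).
Local Open Scope group_scope.
Hypothesis q_pr : prime q.
Hypothesis sylT : q.-Sylow(K) T.

Let X := p'_class_elts q K.
Let Z0 := ('Z(K) :&: T)%G.

Let sTK : T \subset K := pHall_sub sylT.

Let cKZ0 : K \subset 'C(Z0).
Proof. by rewrite centsC subIset // subsetIr. Qed.

Lemma p'_class_eltsE : X = \bigcup_(B in 'C_K(T) :^: K) B.
Proof.
have CKJ g : g \in K -> 'C_K(T) :^ g = 'C_K(T :^ g).
  by move=> Kg; rewrite conjIg conjGid // centJ.
apply/setP=> x; apply/setIdP/bigcupP => [[Kx] | [_ /imsetP[g Kg ->]]].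
  case/(class_p'P q_pr sylT Kx) => g Kg sTgCx.
  by exists ('C_K(T) :^ g); rewrite ?imset_f // CKJ // inE Kx -sub_cent1.
rewrite CKJ // => /setIP[Kx cTgx]; split => //.
by apply/(class_p'P q_pr sylT Kx); exists g; rewrite // sub_cent1.
Qed.

Lemma mul_center_p'_class_elts : 'Z(K) * X \subset X.
Proof.
apply/subsetP=> _ /mulsgP[z x Zz /setIdP[Kx q'x] ->].
rewrite inE groupM ?card_class_center_mul //.
by case/setIP: Zz.
Qed.

Lemma cent_of_norm_rcoset x : x \in X -> T \subset 'N(Z0 :* x) -> x \in 'C(T).
Proof.
case/setIdP=> Kx /(class_p'P q_pr sylT Kx)[g Kg sTgCx] nZxT.
have sTgK : T :^ g \subset K by rewrite -(conjGid Kg) conjSg.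
have nZxTg : T :^ g \subset 'N(Z0 :* x).
  apply/subsetP=> s Tg_s; have Ks := subsetP sTgK s Tg_s.
  rewrite inE conjsMg conjg_set1 (normP (subsetP (cents_norm cKZ0) s Ks)).
  by rewrite /conjg -(cent1P (subsetP sTgCx s Tg_s)) mulKg.
(* T and T :^ g are Sylow in the stabiliser D of Z0 :* x; conjugating one onto
   the other inside D moves x only within Z0 :* x. *)
pose D := 'N_K(Z0 :* x)%G.
have sylTD : q.-Sylow(D) T.
  by apply: (pHall_subl _ (subsetIl K _)); rewrite ?subsetI ?sTK.
have sylTgD : q.-Sylow(D) (T :^ g).
  by apply: (pHall_subl _ (subsetIl K _)); rewrite ?subsetI ?sTgK ?pHallJ.
have [h /setIP[_ nZxh] defT] := Sylow_trans sylTgD sylTD.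
have /rcosetP[z Z0z xh] : x ^ h \in Z0 :* x.
  by rewrite -(normP nZxh) memJ_conjg rcoset_refl.
have cTxh : x ^ h \in 'C(T) by rewrite defT centJ memJ_conjg -sub_cent1.
have cTZ0 : Z0 \subset 'C(T) by rewrite centsC (subset_trans sTK cKZ0).
have -> : x = z^-1 * x ^ h by rewrite xh mulKg.
by rewrite groupM ?groupV // (subsetP cTZ0).
Qed.

Lemma Fix_rcosets_p'_class_elts :
  'Fix_(rcosets Z0 X | 'Js)(T) = rcosets Z0 'C_K(T).
Proof.
apply/setP=> A; apply/setIP/imsetP => [[/imsetP[x Xx ->] /afixP fixZx] | ].
  have Kx : x \in K by case/setIdP: Xx.
  exists x; rewrite // inE Kx (cent_of_norm_rcoset Xx) //.
  by apply/subsetP=> t Tt; apply/normP; rewrite -rcosetE fixZx.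
case=> y /setIP[Ky cTy] ->; split.
  apply: imset_f; rewrite p'_class_eltsE; apply/bigcupP.
  by exists 'C_K(T); rewrite ?inE ?Ky // -{1}(conjsg1 'C_K(T)) imset_f.
apply/afixP=> t Tt /=; have Kt := subsetP sTK t Tt.
rewrite rcosetE conjsMg conjg_set1 (normP (subsetP (cents_norm cKZ0) t Kt)).
by rewrite /conjg (centP cTy t Tt) mulKg.
Qed.

Lemma center_Sylow_sub_center :
  #|X| = (#|'Z(K)|`_q * #|K|`_q^')%N -> 'Z(T) \subset 'Z(K).
Proof.
move=> cardX.
have sylZ0 : q.-Sylow('Z(K)) Z0 := Sylow_setI_normal (center_normal K) sylT.
have cardXX : #|rcosets Z0 X| = (#|K|`_q^')%N.
  apply/eqP; rewrite -(eqn_pmul2l (cardG_gt0 Z0)) -card_rcosets_stable.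
    by rewrite cardX (card_Hall sylZ0).
  exact: subset_trans (mulSg _ (subsetIl _ _)) mul_center_p'_class_elts.
have actsT : [acts T, on rcosets Z0 X | 'Js].
  have XXJ A t : A \in rcosets Z0 X -> t \in K -> A :^ t \in rcosets Z0 X.
    case/imsetP=> x /setIdP[Kx q'x] -> Kt.
    rewrite rcosetE conjsMg conjg_set1 (normP (subsetP (cents_norm cKZ0) t Kt)).
    by rewrite -rcosetE imset_f // inE groupJ ?classGidl.
  apply/actsP=> t /(subsetP sTK) Kt A /=.
  apply/idP/idP => [AtX | AX]; last exact: XXJ AX Kt.
  by rewrite -(conjsgK t A) XXJ ?groupV.
(* T fixes exactly the cosets lying in 'C_K(T), and there are |K|_q' cosets in
   all, so q does not divide #|'C_K(T) : Z0|, a multiple of the q-number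
   #|'Z(T) : Z0|. *)
have := pgroup_fix_mod (pHall_pgroup sylT) actsT.
rewrite Fix_rcosets_p'_class_elts cardXX -/#|'C_K(T) : Z0| => modC.
have q'CZ0 : q^'.-nat #|'C_K(T) : Z0|.
  by rewrite p'natE // /dvdn -modC -/(dvdn _ _) -p'natE // part_pnat.
have sZ0ZT : Z0 \subset 'Z(T).
  by rewrite subsetI subsetIr centsC (subset_trans sTK cKZ0).
have sZTC : 'Z(T) \subset 'C_K(T) := setSI _ sTK.
have qZT : q.-nat #|'Z(T) : Z0|.
  exact: pnat_dvd (dvdn_indexg _ _) (pgroupS (center_sub T) (pHall_pgroup sylT)).
have q'ZT : q^'.-nat #|'Z(T) : Z0|.
  by apply: pnat_dvd q'CZ0; rewrite -(Lagrange_index sZTC sZ0ZT) dvdn_mull.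
apply: subset_trans (subsetIl _ T); rewrite -indexg_eq1.
by rewrite (pnat_1 qZT q'ZT).
Qed.

Lemma Sylow_normal_of_card_p'_class_elts :
  #|X| = (#|'Z(K)|`_q * #|K|`_q^')%N -> T <| K.
Proof.
move=> cardX; set n := #|K : 'N_K(T)|; set c := #|'C_K(T)|.
have le_ZT_Z0 : #|'Z(T)| <= #|'Z(K)|`_q.
  rewrite -(card_Hall (Sylow_setI_normal (center_normal K) sylT)) subset_leq_card //.
  by rewrite subsetI center_Sylow_sub_center // subIset ?subxx.
have le_nc_X : n * c <= #|X|.
  rewrite cardX -(leq_pmul2r (cardG_gt0 T)).
  apply: leq_trans (leq_index_norm_mul_cent sTK) _.
  rewrite -{1}(partnC q (cardG_gt0 K)) -(card_Hall sylT).
  rewrite [(#|T| * _)%N]mulnC mulnA.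
  by rewrite !leq_mul2r le_ZT_Z0 !orbT.
have le_X_nc : #|X| <= 1 + n * (c - 1).
  rewrite p'_class_eltsE; apply: leq_card_bigcup_conjugates (subsetIl _ _) _.
  by rewrite normsI ?norms_cent ?subsetIr // subIset ?normG.
have c_gt0 : 0 < c := cardG_gt0 _.
have n1 : n == 1%N by rewrite eqn_leq indexg_gt0 andbT; nia.
by rewrite /normal sTK (subset_trans _ (subsetIr K _)) // -indexg_eq1.
Qed.

End SylowCenter.

Section Nilpotence.

Variable gT : finGroupType.
Implicit Types (K Q : {group gT}).
Local Open Scope group_scope.

Lemma card_p'_class_elts_nil q Q : prime q -> nilpotent Q ->
  #|p'_class_elts q Q| = (#|'Z(Q)|`_q * #|Q|`_q^')%N.
Proof.
move=> q_pr nilQ; have dQ := nilpotent_pcoreC q nilQ.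
have sylS : q.-Sylow(Q) 'O_q(Q) := nilpotent_pcore_Hall q nilQ.
have nSQ : Q \subset 'N('O_q(Q)) := gFnorm _ Q.
have [_ defQ cSR tiSR] := dprodP dQ.
have -> : p'_class_elts q Q = 'C_Q('O_q(Q)).
  apply/setP=> x; rewrite inE [in RHS]inE; case Qx: (x \in Q) => //=.
  apply/(class_p'P q_pr sylS Qx)/idP => [[g Qg] | cSx].
    by rewrite (normP (subsetP nSQ g Qg)) sub_cent1.
  by exists 1; rewrite ?conjsg1 ?sub_cent1.
have defC : 'C_Q('O_q(Q)) = 'Z('O_q(Q)) * 'O_q^'(Q).
  by rewrite -{1}defQ setIC -group_modr // setIC.
rewrite defC TI_cardMg; last by apply/trivgP; rewrite -tiSR setSI ?center_sub.
have qZ : q.-group 'Z('O_q(Q)) := pgroupS (center_sub _) (pcore_pgroup _ _).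
rewrite -(dprod_card (center_dprod dQ)) partnM // part_pnat_id //.
rewrite part_p'nat ?muln1 ?(card_Hall (nilpotent_pcore_Hall q^' nilQ)) //.
exact: pgroupS (center_sub _) (pcore_pgroup _ _).
Qed.

Lemma normal_Sylows_nil K :
  (forall T : {group gT}, Sylow K T -> T <| K) -> nilpotent K.
Proof.
move=> nsSylK; apply: nilpotentS (Fitting_nil K).
rewrite -{1}(Sylow_gen K) gen_subG; apply/bigcupsP=> T sylT.
apply: Fitting_max; first exact: nsSylK.
by case/SylowP: sylT => p _ /pHall_pgroup/pgroup_nil.
Qed.

End Nilpotence.

Section SameClassSizes.

Variables (gT hT : finGroupType) (K : {group gT}) (Q : {group hT}).
Local Open Scope group_scope.
Hypothesis eqKQ :
  forall n, 0 < n -> num_classes_of_size K n = num_classes_of_size Q n.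

Lemma card_class_size_pred_eq (P : pred nat) :
  #|[set x in K | P #|x ^: K|]| = #|[set x in Q | P #|x ^: Q|]|.
Proof.
rewrite !card_class_size_pred.
rewrite (sum_classes_by_size (fun n => P n * n)%N (leq_maxl #|K| #|Q|)).
rewrite (sum_classes_by_size (fun n => P n * n)%N (leq_maxr #|K| #|Q|)).
apply: eq_bigr => -[[|n] _] _ /=; first by rewrite !num_classes_of_size0.
by rewrite eqKQ.
Qed.

Theorem nilpotent_of_eq_class_sizes : nilpotent Q -> nilpotent K.
Proof.
move=> nilQ; have eqX := card_class_size_pred_eq.
have cardK : #|K| = #|Q|.
  by have := eqX predT; rewrite !setIdE !setIT.
have cardZ : #|'Z(K)| = #|'Z(Q)|.
  by have := eqX (pred1 1%N); rewrite !center_class_size1.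
apply: normal_Sylows_nil => T /SylowP[q q_pr sylT].
apply: (Sylow_normal_of_card_p'_class_elts q_pr sylT).
rewrite [LHS](eqX (fun n => ~~ (q %| n))).
by rewrite (card_p'_class_elts_nil q_pr nilQ) cardZ cardK.
Qed.

End SameClassSizes.

Section PRegularClasses.

Variables (gT : finGroupType) (p : nat).
Implicit Types (H L P : {group gT}).
Local Open Scope group_scope.

Lemma class_dprodr P L H x : P \x L = H -> x \in L -> x ^: H = x ^: L.
Proof.
case/dprodP=> _ defH cPL _ Lx.
have sLH : L \subset H by rewrite -defH mulG_subr.
apply/eqP; rewrite eqEsubset (classS x sLH) andbT -defH.
apply/subsetP=> _ /imsetP[_ /mulsgP[a l Pa Ll ->] ->].
by rewrite conjgM (conjgE x a) (centP (subsetP cPL x Lx) a Pa) mulKg memJ_class.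
Qed.

Lemma num_preg_classes_dprod P L H :
    P \x L = H -> p.-group P -> p^'.-group L ->
  num_preg_classes_of_size H p =1 num_classes_of_size L.
Proof.
move=> defH pP p'L n; have [_ hallL] := coprime_mulpG_Hall (dprodW defH) pP p'L.
have nsLH : L <| H by case/dprod_normal2: defH.
apply: eq_card => C; rewrite !inE; apply/andP/andP => [[] | []].
  case/imsetP=> x Hx -> /andP[p'C szC].
  have Lx : x \in L.
    by rewrite (mem_normal_Hall hallL nsLH Hx) (forall_inP p'C) ?class_refl.
  by rewrite (class_dprodr defH Lx) in szC *; rewrite mem_classes.
case/imsetP=> x Lx -> szC; have Hx := subsetP (normal_sub nsLH) x Lx.
rewrite -(class_dprodr defH Lx) in szC *; rewrite mem_classes // szC andbT; split=> //.
by apply/forall_inP=> _ /imsetP[g _ ->]; rewrite p_eltJ (mem_p_elt p'L).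
Qed.

Lemma num_classes_of_size_p'group L n : prime p -> p^'.-group L -> p %| n ->
  num_classes_of_size L n = 0.
Proof.
move=> p_pr p'L p_n; apply/eqP; rewrite cards_eq0 -subset0.
apply/subsetP=> _ /setIdP[/imsetP[x Lx ->] /eqP szx].
have := pnat_dvd (dvdn_indexg L 'C_L[x]) p'L.
by rewrite index_cent1 szx p'natE // p_n.
Qed.

Lemma num_preg_classes_of_class_gt0 H x : x \in H -> p^'.-elt x ->
  0 < num_preg_classes_of_size H p #|x ^: H|.
Proof.
move=> Hx p'x; rewrite card_gt0; apply/set0Pn; exists (x ^: H).
rewrite inE mem_classes // eqxx andbT.
by apply/forall_inP=> _ /imsetP[g _ ->]; rewrite p_eltJ.
Qed.

Lemma p'_classes_Sylow_normal H P : prime p -> p.-Sylow(H) P ->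
  {in H, forall x, p^'.-elt x -> ~~ (p %| #|x ^: H|)} -> P <| H.
Proof.
move=> p_pr sylP p'H; have sPH := pHall_sub sylP.
suff sHN : H \subset 'N_H(P).
  by rewrite /normal sPH (subset_trans sHN (subsetIr _ _)).
apply: conjugates_cover_sub (subsetIl _ _) _; apply/subsetP=> h Hh.
have Hh_ pi : h.`_pi \in H by apply: subsetP (cycle_constt pi h); rewrite cycle_subG.
(* With h = a * y, a conjugate of P centralising the p-regular part y can be
   chosen to contain the p-part a, and then h normalises it. *)
set a := h.`_p; set y := h.`_p^'.
have /(class_p'P p_pr sylP (Hh_ _))[g Hg sPgCy] := p'H y (Hh_ _) (p_elt_constt _ _).
have sPgH : P :^ g \subset H by rewrite -(conjGid Hg) conjSg.
have sylPg : p.-Sylow('C_H[y]) (P :^ g).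
  by apply: (pHall_subl _ (subsetIl H _)); rewrite ?subsetI ?sPgH ?pHallJ.
have cyh : <[h]> \subset 'C[y].
  by rewrite sub_cent1 (subsetP (cycle_abelian h)) ?cycle_constt.
have sAC : <[a]> \subset 'C_H[y].
  by rewrite cycle_subG inE Hh_ (subsetP cyh) ?cycle_constt.
have [c /setIP[Hc cyc] sAS] := Sylow_subJ sylPg sAC (p_elt_constt _ _).
apply/bigcupP; exists ('N_H(P) :^ (g * c)); first by rewrite imset_f ?groupM.
have sSCy : (P :^ g) :^ c \subset 'C[y].
  by rewrite -(conjGid cyc) conjSg (subset_trans (pHall_sub sylPg)) ?subsetIr.
rewrite conjIg conjGid ?groupM // -normJ conjsgM inE Hh -(consttC p h) groupM //.
  by apply: (subsetP (normG _)); rewrite -cycle_subG.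
by apply: (subsetP (cent_sub _)); rewrite -sub_cent1.
Qed.

Lemma p'_classes_pdprod H : prime p ->
    {in H, forall x, p^'.-elt x -> ~~ (p %| #|x ^: H|)} ->
  exists P L : {group gT}, [/\ P \x L = H, p.-group P & p^'.-group L].
Proof.
move=> p_pr p'H; have [P sylP] := Sylow_exists p H.
have nsPH := p'_classes_Sylow_normal p_pr sylP p'H.
have [L complL] := splitsP (SchurZassenhaus_split (pHall_Hall sylP) nsPH).
have [tiPL defH] := complP complL.
have /and3P[sLH p'L _] : p^'.-Hall(H) L by rewrite -(compl_pHall _ sylP).
have cPL : L \subset 'C(P).
  apply/subsetP=> x Lx; have Hx := subsetP sLH x Lx.
  have /(class_p'P p_pr sylP Hx)[g Hg] := p'H x Hx (mem_p_elt p'L Lx).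
  by rewrite (normP (subsetP (normal_norm nsPH) g Hg)) sub_cent1.
by exists P, L; rewrite dprodE ?(pHall_pgroup sylP).
Qed.

End PRegularClasses.

Theorem corollaryB (gT hT : finGroupType) (G : {group gT}) (H : {group hT})
    (p : nat) :
  prime p -> nilpotent G ->
  (forall n : nat, 0 < n ->
     num_preg_classes_of_size G p n = num_preg_classes_of_size H p n) ->
  nilpotent H.
Proof.
move=> p_pr nilG eq_preg.
have pregG := num_preg_classes_dprod (nilpotent_pcoreC p nilG)
  (pcore_pgroup _ _) (pcore_pgroup _ _).
have p'H : {in H, forall x, p^'.-elt x -> ~~ (p %| #|x ^: H|)}%g.
  move=> x Hx p'x; apply/negP=> p_x.
  have := num_preg_classes_of_class_gt0 Hx p'x.
  rewrite -eq_preg ?pregG ?(num_classes_of_size_p'group p_pr (pcore_pgroup _ _) p_x) //.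
  by rewrite card_gt0; apply/set0Pn; exists x; apply: class_refl.
have [P [L [defH pP p'L]]] := p'_classes_pdprod p_pr p'H.
rewrite (dprod_nil defH) (pgroup_nil pP) /=.
apply: nilpotent_of_eq_class_sizes (nilpotentS (pcore_sub _ _) nilG) => n n_gt0.
by rewrite -(num_preg_classes_dprod defH pP p'L) -eq_preg // pregG.
Qed.
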